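(* Define the relation $\sim$ on $\mathcal{T}$ by $x \sim y \iff \delta(x,y) = 0$ (warping identification). Then $\sim$ is an equivalence relation on $\mathcal{T}$.
   Context: A time series of length $n\ge 1$ is a finite sequence $x=(x_1,\dots,x_n)$ of reals; $\mathcal{T}$ denotes the set of all time series of finite length. For $m,n\in\mathbb{N}$, a warping path of order $m\times n$ and length $\ell$ is a sequence $p=(p_1,\dots,p_\ell)$ of points $p_l=(i_l,j_l)\in[m]\times[n]$ (where $[n]=\{1,\dots,n\}$) with $p_1=(1,1)$, $p_\ell=(m,n)$, and $p_{l+1}-p_l\in\{(1,0),(0,1),(1,1)\}$ for all $l\in[\ell-1]$; $\mathcal{P}_{m,n}$ is the set of such paths. For $x$ of length $m$ and $y$ of length $n$, the cost along $p$ is $C_p(x,y)=\sum_{(i,j)\in p}(x_i-y_j)^2$, and the dtw-distance is $\delta(x,y)=\min\{\sqrt{C_p(x,y)} : p\in\mathcal{P}_{m,n}\}$. *)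

From Stdlib Require Import Reals List Lra Lia.
Import ListNotations.
Open Scope R_scope.

Definition tseries := list R.
Definition is_tseries (x : tseries) : Prop := (1 <= length x)%nat.

(* 1-based access x_i. *)
Definition at1 (x : tseries) (i : nat) : R := nth (i - 1) x 0.

Definition warp_step (a b : nat * nat) : Prop :=
  (fst b = S (fst a) /\ snd b = snd a) \/
  (fst b = fst a /\ snd b = S (snd a)) \/
  (fst b = S (fst a) /\ snd b = S (snd a)).

Fixpoint warp_steps (p : list (nat * nat)) : Prop :=
  match p with
  | a :: ((b :: _) as q) => warp_step a b /\ warp_steps q
  | _ => True
  end.

Definition warping_path (m n : nat) (p : list (nat * nat)) : Prop :=
  (forall ij, In ij p -> (1 <= fst ij <= m)%nat /\ (1 <= snd ij <= n)%nat) /\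
  head p = Some (1%nat, 1%nat) /\
  last p (0%nat, 0%nat) = (m, n) /\ p <> [] /\
  warp_steps p.

Definition cost (p : list (nat * nat)) (x y : tseries) : R :=
  fold_right (fun ij acc => (at1 x (fst ij) - at1 y (snd ij)) ^ 2 + acc) 0 p.

Definition is_dtw (x y : tseries) (d : R) : Prop :=
  (exists p, warping_path (length x) (length y) p /\ d = sqrt (cost p x y)) /\
  (forall q, warping_path (length x) (length y) q -> d <= sqrt (cost q x y)).

Definition warp_equiv (x y : tseries) : Prop := is_dtw x y 0.

From Stdlib Require Import Reals List Lra Lia.
Import ListNotations.
Open Scope R_scope.

(* Since every cost C_p(x,y) is a sum of squares, delta(x,y) = 0 holds exactly
   when some warping path p is "aligned": x_i = y_j for every (i,j) on p.
   Such a zero-cost path is either the single point (1,1) or it starts with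
   (1,1) followed by a step (d,e) in {(1,0),(0,1),(1,1)}; removing the first
   point and shifting the remainder back by (d,e) yields a zero-cost path
   between x with its first d entries dropped and y with its first e entries
   dropped, and this peeling step can be reversed.  Hence delta(x,y) = 0 is
   equivalent to the inductive relation [zero_warp], which builds x and y
   from a common head by advancing in x, in y, or in both.  Reflexivity and
   symmetry of [zero_warp] are immediate, and transitivity follows by
   induction on the total length of the three series. *)

Definition aligned (p : list (nat * nat)) (x y : tseries) : Prop :=
  forall ij, In ij p -> at1 x (fst ij) = at1 y (snd ij).

Definition zero_path (x y : tseries) (p : list (nat * nat)) : Prop :=
  warping_path (length x) (length y) p /\ aligned p x y.

Definition shift (d e : nat) (ij : nat * nat) : nat * nat := (fst ij + d, snd ij + e)%nat.
Definition unshift (d e : nat) (ij : nat * nat) : nat * nat := (fst ij - d, snd ij - e)%nat.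

Lemma cost_nonneg p x y : 0 <= cost p x y.
Proof.
  induction p as [|ij p IH]; simpl; [lra|].
  pose proof (pow2_ge_0 (at1 x (fst ij) - at1 y (snd ij))); lra.
Qed.

Lemma cost_eq0_iff p x y : cost p x y = 0 <-> aligned p x y.
Proof.
  induction p as [|ij p IH]; simpl.
  - split; [intros _ ij []|reflexivity].
  - pose proof (pow2_ge_0 (at1 x (fst ij) - at1 y (snd ij))) as Hsq.
    pose proof (cost_nonneg p x y) as Hrest.
    split.
    + intros H kl [<-|Hkl].
      * assert ((at1 x (fst ij) - at1 y (snd ij)) ^ 2 = 0) by lra. nra.
      * apply IH; [lra|exact Hkl].
    + intros H. rewrite (H ij (or_introl eq_refl)), (proj2 IH (fun kl Hkl => H kl (or_intror Hkl))).
      ring.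
Qed.

Lemma warp_equiv_iff x y : warp_equiv x y <-> exists p, zero_path x y p.
Proof.
  unfold warp_equiv, is_dtw, zero_path. split.
  - intros [[p [Hp Hc]] _]. exists p. split; [exact Hp|].
    apply cost_eq0_iff, sqrt_eq_0; [apply cost_nonneg|now symmetry].
  - intros [p [Hp Hal]]. split.
    + exists p. split; [exact Hp|]. now rewrite (proj2 (cost_eq0_iff p x y) Hal), sqrt_0.
    + intros; apply sqrt_pos.
Qed.

Lemma warp_step_shift d e a b : warp_step (shift d e a) (shift d e b) <-> warp_step a b.
Proof. destruct a, b; unfold warp_step, shift; simpl; lia. Qed.

Lemma warp_steps_shift d e p : warp_steps (map (shift d e) p) <-> warp_steps p.
Proof.
  induction p as [|a [|b p] IH]; [simpl; tauto|simpl; tauto|].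
  change (warp_step (shift d e a) (shift d e b) /\ warp_steps (map (shift d e) (b :: p))
          <-> warp_step a b /\ warp_steps (b :: p)).
  now rewrite warp_step_shift, IH.
Qed.

Lemma warp_steps_lower_bound a p :
  warp_steps (a :: p) -> forall ij, In ij (a :: p) -> (fst a <= fst ij /\ snd a <= snd ij)%nat.
Proof.
  revert a; induction p as [|b p IH]; intros a Hst ij Hin.
  - destruct Hin as [<-|[]]; lia.
  - destruct Hst as [Hab Hst]. destruct Hin as [<-|Hin]; [lia|].
    specialize (IH b Hst ij Hin). unfold warp_step in Hab; lia.
Qed.

Lemma last_map (f : nat * nat -> nat * nat) p d d' :
  p <> [] -> last (map f p) d' = f (last p d).
Proof.
  induction p as [|a [|b p] IH]; intros Hne; [congruence|reflexivity|].
  apply IH; discriminate.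
Qed.

Lemma warping_path_extend d e m n p :
  warp_step (1, 1)%nat (1 + d, 1 + e)%nat -> warping_path m n p ->
  warping_path (m + d) (n + e) ((1, 1)%nat :: map (shift d e) p).
Proof.
  intros Hs [Hin [Hh [Hl [Hne Hst]]]].
  destruct p as [|b p]; [congruence|]. injection Hh as ->.
  split; [|split; [reflexivity|split; [|split; [discriminate|]]]].
  - pose proof (Hin _ (or_introl eq_refl)) as Hord; simpl in Hord.
    intros ij [<-|Hij]; [simpl; lia|].
    apply in_map_iff in Hij as [kl [<- Hkl]]. specialize (Hin kl Hkl). unfold shift; simpl; lia.
  - change (last (map (shift d e) ((1, 1)%nat :: p)) (0, 0)%nat = (m + d, n + e)%nat).
    now rewrite (last_map _ _ (0, 0)%nat), Hl by discriminate.
  - split; [exact Hs|]. now apply (warp_steps_shift d e ((1, 1)%nat :: p)).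
Qed.

Lemma warping_path_peel d e m n q :
  warping_path m n ((1, 1)%nat :: (1 + d, 1 + e)%nat :: q) ->
  exists p, (1 + d, 1 + e)%nat :: q = map (shift d e) p /\
            length p = S (length q) /\ warping_path (m - d) (n - e) p.
Proof.
  intros [Hin [_ [Hl [_ [_ Hst]]]]].
  pose proof (warp_steps_lower_bound _ _ Hst) as Hlb; simpl in Hlb.
  set (r := (1 + d, 1 + e)%nat :: q) in *.
  assert (Hrange : forall ij, In ij r ->
            (1 + d <= fst ij <= m /\ 1 + e <= snd ij <= n)%nat).
  { intros ij Hij. specialize (Hlb ij Hij). specialize (Hin ij (or_intror Hij)). lia. }
  assert (Hback : map (shift d e) (map (unshift d e) r) = r).
  { rewrite map_map. transitivity (map (fun ij => ij) r); [|apply map_id]. apply map_ext_in.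
    intros [i j] Hij. apply Hrange in Hij. unfold shift, unshift; simpl in *. f_equal; lia. }
  exists (map (unshift d e) r). split; [now rewrite Hback|]. split; [now rewrite length_map|].
  split; [|split; [|split; [|split]]].
  - intros ij Hij. apply in_map_iff in Hij as [kl [<- Hkl]]. apply Hrange in Hkl.
    unfold unshift; simpl; lia.
  - unfold r, unshift; cbn [map head fst snd]. do 2 f_equal; lia.
  - rewrite (last_map _ _ (0, 0)%nat) by discriminate.
    change (last r (0, 0)%nat = (m, n)) in Hl. rewrite Hl. reflexivity.
  - discriminate.
  - apply (warp_steps_shift d e). now rewrite Hback.
Qed.

Lemma warping_path_orders m n p : warping_path m n p -> (1 <= m /\ 1 <= n)%nat.
Proof.
  intros [Hin [Hh _]]. destruct p as [|a p]; [discriminate|]. injection Hh as ->.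
  specialize (Hin _ (or_introl eq_refl)). simpl in Hin. lia.
Qed.

Lemma at1_skipn d x i : (1 <= i)%nat -> at1 (skipn d x) i = at1 x (i + d).
Proof. intros Hi. unfold at1. rewrite nth_skipn. f_equal. lia. Qed.

Lemma aligned_shift d e p x y :
  (forall ij, In ij p -> (1 <= fst ij /\ 1 <= snd ij)%nat) ->
  aligned (map (shift d e) p) x y <-> aligned p (skipn d x) (skipn e y).
Proof.
  intros Hpos. split.
  - intros H ij Hij. destruct (Hpos ij Hij). rewrite !at1_skipn by lia.
    apply (H (shift d e ij)), in_map, Hij.
  - intros H ij Hij. apply in_map_iff in Hij as [kl [<- Hkl]]. destruct (Hpos kl Hkl).
    unfold shift; simpl. rewrite <- !at1_skipn by lia. now apply H.
Qed.

Lemma zero_path_extend d e x y p :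
  warp_step (1, 1)%nat (1 + d, 1 + e)%nat -> at1 x 1 = at1 y 1 ->
  zero_path (skipn d x) (skipn e y) p -> zero_path x y ((1, 1)%nat :: map (shift d e) p).
Proof.
  intros Hs H11 [Hp Hal].
  pose proof (warping_path_orders _ _ _ Hp) as Hord. rewrite !length_skipn in Hord, Hp.
  split.
  - replace (length x) with (length x - d + d)%nat by lia.
    replace (length y) with (length y - e + e)%nat by lia.
    now apply warping_path_extend.
  - intros ij [<-|Hij]; [exact H11|]. revert ij Hij. apply aligned_shift; [|exact Hal].
    intros ij Hij. destruct Hp as [Hin _]. specialize (Hin ij Hij). lia.
Qed.

Lemma zero_path_peel d e x y q :
  zero_path x y ((1, 1)%nat :: (1 + d, 1 + e)%nat :: q) ->
  exists p, length p = S (length q) /\ zero_path (skipn d x) (skipn e y) p.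
Proof.
  intros [Hp Hal].
  destruct (warping_path_peel _ _ _ _ _ Hp) as [p [Hr [Hlen Hp']]].
  exists p. split; [exact Hlen|]. split; [now rewrite !length_skipn|].
  apply aligned_shift.
  - intros ij Hij. destruct Hp' as [Hin _]. specialize (Hin ij Hij). lia.
  - rewrite <- Hr. intros ij Hij. exact (Hal ij (or_intror Hij)).
Qed.

Inductive zero_warp : tseries -> tseries -> Prop :=
| zw_single a : zero_warp [a] [a]
| zw_left a x y : zero_warp x (a :: y) -> zero_warp (a :: x) (a :: y)
| zw_right a x y : zero_warp (a :: x) y -> zero_warp (a :: x) (a :: y)
| zw_both a x y : zero_warp x y -> zero_warp (a :: x) (a :: y).

Lemma zero_warp_path x y : zero_warp x y -> exists p, zero_path x y p.
Proof.
  induction 1 as [a|a x y _ [p Hp]|a x y _ [p Hp]|a x y _ [p Hp]].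
  - exists [(1, 1)%nat]. split; [split; [|split; [|split; [|split]]]|].
    + intros ij [<-|[]]; simpl; lia.
    + reflexivity.
    + reflexivity.
    + discriminate.
    + exact I.
    + intros ij [<-|[]]; reflexivity.
  - exists ((1, 1)%nat :: map (shift 1 0) p).
    apply zero_path_extend; [unfold warp_step; simpl; lia|reflexivity|exact Hp].
  - exists ((1, 1)%nat :: map (shift 0 1) p).
    apply zero_path_extend; [unfold warp_step; simpl; lia|reflexivity|exact Hp].
  - exists ((1, 1)%nat :: map (shift 1 1) p).
    apply zero_path_extend; [unfold warp_step; simpl; lia|reflexivity|exact Hp].
Qed.

Lemma path_zero_warp n : forall x y p, (length p <= n)%nat -> zero_path x y p -> zero_warp x y.
Proof.
  induction n as [|n IH]; intros x y p Hlen Hzp.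
  { destruct Hzp as [[_ [_ [_ [Hne _]]]] _]. destruct p; [congruence|simpl in Hlen; lia]. }
  pose proof Hzp as [[Hin [Hh [Hl [_ Hst]]]] Hal].
  destruct p as [|o q]; [discriminate|]. injection Hh as ->.
  pose proof (Hin _ (or_introl eq_refl)) as Hord; simpl in Hord.
  destruct x as [|a x]; [simpl in Hord; lia|]. destruct y as [|c y]; [simpl in Hord; lia|].
  assert (Hac : a = c) by exact (Hal _ (or_introl eq_refl)). subst c.
  destruct q as [|b q].
  - simpl in Hl. injection Hl as Hx Hy.
    destruct x; [|simpl in Hx; lia]. destruct y; [|simpl in Hy; lia]. constructor.
  - destruct Hst as [Hs _]. destruct b as [i j]. unfold warp_step in Hs; simpl in Hs.
    assert (Hpeel : forall d e, (i, j) = (1 + d, 1 + e)%nat ->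
              exists p, (length p <= n)%nat /\ zero_path (skipn d (a :: x)) (skipn e (a :: y)) p).
    { intros d e Hde. rewrite Hde in Hzp.
      destruct (zero_path_peel _ _ _ _ _ Hzp) as [p [Hlp Hp]].
      exists p. split; [simpl in Hlen; lia|exact Hp]. }
    destruct Hs as [[-> ->]|[[-> ->]|[-> ->]]].
    + destruct (Hpeel 1%nat 0%nat eq_refl) as [p [Hlp Hp]]. apply zw_left. exact (IH _ _ p Hlp Hp).
    + destruct (Hpeel 0%nat 1%nat eq_refl) as [p [Hlp Hp]]. apply zw_right. exact (IH _ _ p Hlp Hp).
    + destruct (Hpeel 1%nat 1%nat eq_refl) as [p [Hlp Hp]]. apply zw_both. exact (IH _ _ p Hlp Hp).
Qed.

Lemma warp_equiv_zero_warp x y : warp_equiv x y <-> zero_warp x y.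
Proof.
  rewrite warp_equiv_iff. split.
  - intros [p Hp]. exact (path_zero_warp _ x y p (le_n _) Hp).
  - apply zero_warp_path.
Qed.

Lemma zero_warp_nonempty x y : zero_warp x y -> x <> [] /\ y <> [].
Proof. destruct 1; split; discriminate. Qed.

Lemma zero_warp_head a b x y : zero_warp (a :: x) (b :: y) -> a = b.
Proof. inversion 1; reflexivity. Qed.

Lemma zero_warp_refl x : x <> [] -> zero_warp x x.
Proof.
  induction x as [|a [|b x] IH]; intros Hne; [congruence|constructor|].
  apply zw_both, IH; discriminate.
Qed.

Lemma zero_warp_sym x y : zero_warp x y -> zero_warp y x.
Proof. induction 1; constructor; assumption. Qed.

Lemma zero_warp_trans n : forall x y z, (length x + length y + length z <= n)%nat ->
  zero_warp x y -> zero_warp y z -> zero_warp x z.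
Proof.
  induction n as [|n IH]; intros x y z Hn Hxy Hyz.
  { destruct Hxy; simpl in Hn; lia. }
  destruct Hxy as [a|a x y H|a x y H|a x y H].
  - exact Hyz.
  - destruct z as [|c z]; [now destruct (zero_warp_nonempty _ _ Hyz)|].
    pose proof (zero_warp_head _ _ _ _ Hyz) as <-.
    apply zw_left, (IH x (a :: y)); [simpl in *; lia|exact H|exact Hyz].
  - inversion Hyz as [|b y' z' H'|b y' z' H'|b y' z' H']; subst.
    + now destruct (zero_warp_nonempty _ _ H).
    + apply (IH (a :: x) y); [simpl in *; lia|exact H|exact H'].
    + apply zw_right, (IH (a :: x) (a :: y)); [simpl in *; lia|now apply zw_right|exact H'].
    + apply zw_right, (IH (a :: x) y); [simpl in *; lia|exact H|exact H'].
  - inversion Hyz as [|b y' z' H'|b y' z' H'|b y' z' H']; subst.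
    + now destruct (zero_warp_nonempty _ _ H).
    + apply zw_left, (IH x y); [simpl in *; lia|exact H|exact H'].
    + apply zw_right, (IH (a :: x) (a :: y)); [simpl in *; lia|now apply zw_both|exact H'].
    + apply zw_both, (IH x y); [simpl in *; lia|exact H|exact H'].
Qed.

Theorem proposition1 :
  (forall x, is_tseries x -> warp_equiv x x) /\
  (forall x y, is_tseries x -> is_tseries y -> warp_equiv x y -> warp_equiv y x) /\
  (forall x y z, is_tseries x -> is_tseries y -> is_tseries z ->
     warp_equiv x y -> warp_equiv y z -> warp_equiv x z).
Proof.
  split; [|split].
  - intros x Hx. apply warp_equiv_zero_warp, zero_warp_refl.
    destruct x; [unfold is_tseries in Hx; simpl in Hx; lia|discriminate].
  - intros x y _ _ Hxy. apply warp_equiv_zero_warp, zero_warp_sym, warp_equiv_zero_warp, Hxy.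
  - intros x y z _ _ _ Hxy Hyz. apply warp_equiv_zero_warp in Hxy, Hyz.
    apply warp_equiv_zero_warp, (zero_warp_trans _ x y z (le_n _) Hxy Hyz).
Qed.
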